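(* A family $\mathcal F$ of safety constraints is a family with a universal detector if and only if there exists $C\subseteq\Omega$ such that (1) for every $P\in C$ and every $n\in N$, either $n\in P$ or $n^{-1}\cdot P\in C$; and (2) for every safety constraint $S$, $S\in\mathcal F$ if and only if $S=C_\omega(P)$ for some $P\in C$.
   Context: Fix a finite nonempty set $N$; $N^+$ the nonempty finite words, $N^{\mathbb N}$ the streams; $s[0{:}m]$ prefix of length $m$, $s[m{:}]$ suffix; $n^{-1}\cdot A=\{u:nu\in A\}$; a set of words is prefix-free if no proper prefix (including the empty word) of a member is a member. A safety constraint is a set $S\subseteq N^{\mathbb N}$ such that any $s$ with ''for every $m$ there is $s'\in S$ with $s'[0{:}m]=s[0{:}m]$'' belongs to $S$. Let $\mathbf 1=\{\Downarrow\}$. A detector is a set $|a|$ with $a:|a|\to(\mathbf 1+|a|)^N$. The final detector $\omega$ has carrier $\Omega$ = the set of prefix-free subsets of $N^+$, with $\omega(P)(n)=\Downarrow$ if $n\in P$, else $n^{-1}\cdot P$. For $s\in N^{\mathbb N}$, $\mathrm{Join}([s],a)$ maps $(t,y)\in\{s[k{:}]\}\times|a|$ to $\Downarrow$ if $a(y)(t(0))=\Downarrow$, else $(t[1{:}],a(y)(t(0)))$; iterates $g^{(1)}=g$, $g^{(k+1)}(z)=\Downarrow$ if $g^{(k)}(z)=\Downarrow$, else $g(g^{(k)}(z))$. $C_a(x)=\{s:\mathrm{Join}([s],a)^{(k)}(s,x)\ne\Downarrow\ \forall k\ge1\}$. A family $\mathcal F$ of safety constraints is a family with a universal detector if $\mathcal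 F=\{C_a(x):x\in|a|\}$ for some detector $a$. *)

From mathcomp Require Import all_boot.
From Stdlib Require Import ClassicalEpsilon.
Set Implicit Arguments. Unset Strict Implicit. Unset Printing Implicit Defensive.

Section Defs.
Variable N : finType.

Definition stream := nat -> N.

Definition safety (S : stream -> Prop) : Prop :=
  forall s : stream,
    (forall m : nat, exists s' : stream, S s' /\ (forall i, (i < m)%N -> s' i = s i)) ->
    S s.

(* detector with carrier X: a : X -> (1 + X)^N, None playing the role of the
   stop symbol (Downarrow). *)
Definition detector (X : Type) := X -> N -> option X.

Definition join (X : Type) (a : detector X) (z : stream * X) : option (stream * X) :=
  match a z.2 (z.1 0) with
  | None => None
  | Some y' => Some (fun n => z.1 n.+1, y')
  end.

(* iterates: g^(0) z = z (auxiliary), g^(k+1) z = Downarrow if g^(k) z = Downarrow,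
   else g (g^(k) z); for k >= 1 this is the paper's g^(k). *)
Fixpoint giter (Z : Type) (g : Z -> option Z) (k : nat) (z : Z) : option Z :=
  match k with
  | 0 => Some z
  | k'.+1 => match giter g k' z with None => None | Some z' => g z' end
  end.

Definition Cdet (X : Type) (a : detector X) (x : X) : stream -> Prop :=
  fun s => forall k : nat, (1 <= k)%N -> giter (join a) k (s, x) <> None.

(* prefix-free subsets of N^+ (words are lists; N^+ excludes the empty word) *)
Definition prefix_free (P : seq N -> Prop) : Prop :=
  ~ P [::] /\ (forall u v : seq N, P u -> P (u ++ v) -> v = [::]).

Definition Omega := { P : seq N -> Prop | prefix_free P }.

Definition lquot (n : N) (P : seq N -> Prop) : seq N -> Prop := fun u => P (n :: u).

Lemma lquot_prefix_free (P : Omega) (n : N) :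
  ~ proj1_sig P [:: n] -> prefix_free (lquot n (proj1_sig P)).
Proof.
case: P => P [P0 PP] /= Hn; split; first exact: Hn.
move=> u v Hu Huv; exact: (PP (n :: u) v Hu Huv).
Qed.

Definition omega : detector Omega :=
  fun P n =>
    match excluded_middle_informative (proj1_sig P [:: n]) with
    | left _ => None
    | right h => Some (exist _ (lquot n (proj1_sig P)) (lquot_prefix_free h))
    end.

End Defs.

(* From a state [x], a detector stops exactly on the words of a prefix-free
   set, and this set, viewed as a state of the final detector [omega],
   behaves like [x]; so the images of the states form a subset of [Omega]
   closed under the transitions of [omega] and yielding the same family.
   Conversely a subset [C] of [Omega] closed under these transitions carries
   a subdetector of [omega] whose constraints are those of [omega] on [C].
   Both facts rest on bisimulation: related states have the same constraint. *)
From mathcomp Require Import all_boot.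
From Stdlib Require Import ClassicalEpsilon FunctionalExtensionality PropExtensionality.
Set Implicit Arguments. Unset Strict Implicit. Unset Printing Implicit Defensive.

Section Runs.
Variables (N : finType) (X : Type) (a : detector N X).

Fixpoint run (x : X) (s : stream N) (k : nat) : option X :=
  if k is k'.+1 then
    if run x s k' is Some y then a y (s k') else None
  else Some x.

Lemma giter_join_run x s k :
  giter (join a) k (s, x) = omap (fun y => (fun n => s (k + n), y)) (run x s k).
Proof.
elim: k => [|k IHk] /=.
  by congr (Some (_, _)); apply: functional_extensionality.
rewrite IHk; case: (run x s k) => [y|] //=.
rewrite /join /= addn0; case: (a y (s k)) => [y'|] //=.
by congr (Some (_, _)); apply: functional_extensionality => n; rewrite addSnnS.
Qed.

Lemma CdetE x s : Cdet a x s <-> forall k, run x s k <> None.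
Proof.
split=> Hs k.
  case: k => [|k] //; have := Hs k.+1 isT.
  by rewrite giter_join_run; case: (run x s k.+1).
by move=> _; rewrite giter_join_run; have := Hs k; case: (run x s k).
Qed.

Lemma run_prefix x s s' k :
  (forall i, (i < k)%N -> s' i = s i) -> run x s' k = run x s k.
Proof.
elim: k => [|k IHk] //= eq_ss'.
by rewrite IHk ?eq_ss' // => i lt_ik; apply/eq_ss'/ltnW.
Qed.

Lemma Cdet_safety x : safety (Cdet a x).
Proof.
move=> s Hs; apply/CdetE => k.
have [s' [/CdetE Cs' eq_ss']] := Hs k.
by rewrite -(run_prefix x eq_ss').
Qed.

End Runs.

Definition orel (X Y : Type) (R : X -> Y -> Prop) (o1 : option X) (o2 : option Y) :=
  match o1, o2 with
  | None, None => True
  | Some x, Some y => R x y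
  | _, _ => False
  end.

Lemma Cdet_bisim (N : finType) (X Y : Type) (a : detector N X) (b : detector N Y)
    (R : X -> Y -> Prop) :
  (forall x y, R x y -> forall n, orel R (a x n) (b y n)) ->
  forall x y, R x y -> Cdet a x = Cdet b y.
Proof.
move=> bisim x y Rxy.
have Rrun s k : orel R (run a x s k) (run b y s k).
  elim: k => [|k] //=.
  by case: (run a x s k) => [x'|]; case: (run b y s k) => [y'|] // /bisim.
apply: functional_extensionality => s; apply: propositional_extensionality.
rewrite !CdetE; split=> Hs k; have := Rrun s k; have := Hs k;
  by case: (run a x s k); case: (run b y s k).
Qed.

Section FinalDetector.
Variable N : finType.
Implicit Types (P : Omega N) (n : N).

Lemma omega_stop P n : proj1_sig P [:: n] -> omega P n = None.
Proof. by rewrite /omega; case: excluded_middle_informative. Qed.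

Lemma omega_step P n : ~ proj1_sig P [:: n] ->
  exists Q, omega P n = Some Q /\ proj1_sig Q = lquot n (proj1_sig P).
Proof. by rewrite /omega; case: excluded_middle_informative => // h _; eexists. Qed.

End FinalDetector.

Section StopWords.
Variables (N : finType) (X : Type) (a : detector N X).

(* The words on whose last letter [a] stops when started in [x]: the state
   of [omega] corresponding to [x]. *)
Fixpoint stop_words (x : X) (w : seq N) : Prop :=
  if w is n :: w' then
    if a x n is Some y then stop_words y w' else w' = [::]
  else False.

Lemma stop_words_prefix_free x : prefix_free (stop_words x).
Proof.
split=> // u v; elim: u x => [|n u IHu] x //=.
by case: (a x n) => [y|]; [apply: IHu | move=> -> /=].
Qed.

Definition omega_of (x : X) : Omega N :=
  exist _ (stop_words x) (stop_words_prefix_free x).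

Lemma lquot_stop_words x n y :
  a x n = Some y -> lquot n (stop_words x) = stop_words y.
Proof. by move=> axn; apply: functional_extensionality => u; rewrite /lquot /= axn. Qed.

Lemma Cdet_omega_of x P :
  proj1_sig P = stop_words x -> Cdet a x = Cdet (omega (N:=N)) P.
Proof.
apply: (Cdet_bisim (R := fun x P => proj1_sig P = stop_words x)) => {}x {}P PE n.
case axn: (a x n) => [y|].
  have [|Q [-> QE]] := omega_step (P := P) (n := n); first by rewrite PE /= axn.
  by rewrite /= QE PE (lquot_stop_words axn).
by rewrite omega_stop // PE /= axn.
Qed.

Lemma omega_of_closed (P : Omega N) : (exists x, proj1_sig P = stop_words x) -> forall n,
  proj1_sig P [:: n] \/
  exists Q : Omega N, (exists y, proj1_sig Q = stop_words y) /\ proj1_sig Q = lquot n (proj1_sig P).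
Proof.
move=> [x ->] n /=; case axn: (a x n) => [y|]; last by left.
by right; exists (omega_of y); split; [exists y | rewrite (lquot_stop_words axn)].
Qed.

End StopWords.

Section Subdetector.
Variables (N : finType) (C : Omega N -> Prop).
Hypothesis C_closed : forall P, C P -> forall n,
  proj1_sig P [:: n] \/ exists Q, C Q /\ proj1_sig Q = lquot n (proj1_sig P).

Lemma sub_step (x : {P | C P}) n : ~ proj1_sig (proj1_sig x) [:: n] ->
  exists y : {P | C P}, proj1_sig (proj1_sig y) = lquot n (proj1_sig (proj1_sig x)).
Proof.
case: x => P CP /= Pn; have [//|[Q [CQ QE]]] := C_closed CP n.
by exists (exist _ Q CQ).
Qed.

(* The restriction of [omega] to [C]; a transition of [omega] from a state of
   [C] only determines the word set of the target, whence the choice. *)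
Definition omega_on : detector N {P | C P} := fun x n =>
  match excluded_middle_informative (proj1_sig (proj1_sig x) [:: n]) with
  | left _ => None
  | right h => Some (proj1_sig (constructive_indefinite_description _ (sub_step h)))
  end.

Lemma Cdet_omega_on x : Cdet omega_on x = Cdet (omega (N:=N)) (proj1_sig x).
Proof.
apply: (Cdet_bisim (R := fun x P => proj1_sig (proj1_sig x) = proj1_sig P)) => //.
move=> {}x P xP n; rewrite /omega_on; case: excluded_middle_informative => h.
  by rewrite omega_stop // -xP.
have [|Q [-> QE]] := omega_step (P := P) (n := n); first by rewrite -xP.
by case: constructive_indefinite_description => y /= ->; rewrite QE xP.
Qed.

End Subdetector.

Theorem mainTheorem16 (N : finType) (hN : (0 < #|N|)%N)
  (F : (stream N -> Prop) -> Prop) (hF : forall S, F S -> safety S) :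
  (exists (X : Type) (a : detector N X),
      forall S : stream N -> Prop, F S <-> exists x : X, S = Cdet a x)
  <->
  (exists C : Omega N -> Prop,
      (forall P : Omega N, C P -> forall n : N,
         proj1_sig P [:: n] \/
         (exists Q : Omega N, C Q /\ proj1_sig Q = lquot n (proj1_sig P)))
      /\
      (forall S : stream N -> Prop, safety S ->
         (F S <-> exists P : Omega N, C P /\ S = Cdet (omega (N:=N)) P))).
Proof.
split.
- move=> [X [a Funiv]].
  exists (fun P => exists x, proj1_sig P = stop_words a x).
  split; first exact: omega_of_closed.
  move=> S _; rewrite Funiv; split.
    move=> [x ->]; exists (omega_of a x).
    by split; [exists x | apply: Cdet_omega_of].
  by move=> [P [[x Px] ->]]; exists x; rewrite (Cdet_omega_of Px).
- move=> [C [C_closed FC]]; exists {P | C P}, (omega_on C_closed) => S.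
  split=> [FS | [x ->]].
    have [P [CP ->]] := (FC S (hF S FS)).1 FS.
    by exists (exist _ P CP); rewrite Cdet_omega_on.
  rewrite Cdet_omega_on; apply/FC; first exact: Cdet_safety.
  by exists (proj1_sig x); split => //; apply: proj2_sig.
Qed.
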